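(* Let $k\ge 1$ and $\rho\ge 0$ be integers. Every connected graph $G=(V,E)$ with at least $k$ vertices and $\mathrm{tb}_k(G)\leq\rho$ has a balanced $\mathbf{D_\rho^k}$-separator, i.e., there exist $k$ distinct vertices $v_1,\dots,v_k$ such that every connected component of $G[V\setminus \bigcup_{j=1}^k D_\rho(v_j,G)]$ has at most $|V|/2$ vertices.
   Context: Graphs are finite, connected, unweighted, undirected and simple; $d_G$ is the shortest-path distance, $D_r(v,G)=\{u: d_G(u,v)\le r\}$, and $G[S]$ is the subgraph induced by $S$. A tree-decomposition of $G=(V,E)$ is a pair $(\{X_i\mid i\in I\},T=(I,F))$ with $T$ a tree and bags $X_i\subseteq V$ such that (1) $\bigcup_i X_i=V$; (2) every edge lies in some bag; (3) for each $v\in V$ the nodes $i$ with $v\in X_i$ induce a connected subtree of $T$. The $k$-breadth of a tree-decomposition is the minimum integer $r$ such that each bag $X_i$ is covered by at most $k$ disks of $G$ of radius $r$, i.e., there are vertices $v^i_1,\dots,v^i_k$ of $G$ with $X_i\subseteq D_r(v^i_1,G)\cup\dots\cup D_r(v^i_k,G)$. The $k$-tree-breadth $\mathrm{tb}_k(G)$ is the minimum $k$-breadth over all tree-decompositions of $G$. *)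

From mathcomp Require Import all_boot.
Set Implicit Arguments. Unset Strict Implicit. Unset Printing Implicit Defensive.

Definition simple_graph (T : finType) (e : rel T) : Prop :=
  symmetric e /\ irreflexive e.

Definition connected_graph (T : finType) (e : rel T) : Prop :=
  forall x y : T, connect e x y.

Definition induced (T : finType) (e : rel T) (S : {set T}) : rel T :=
  [rel x y | [&& x \in S, y \in S & e x y]].

Definition dist_le (T : finType) (e : rel T) (r : nat) (u v : T) : bool :=
  [exists n : 'I_r.+1, [exists p : n.-tuple T, path e u p && (last u p == v)]].

Definition disk (T : finType) (e : rel T) (r : nat) (v : T) : {set T} :=
  [set u | dist_le e r v u].

Definition is_tree (I : finType) (F : rel I) : Prop :=
  simple_graph F /\ connected_graph F /\
  forall c : seq I, ~~ [&& cycle F c, uniq c & 2 < size c].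

Definition tree_decomposition (T : finType) (e : rel T)
  (I : finType) (F : rel I) (X : I -> {set T}) : Prop :=
  [/\ is_tree F,
      (forall v : T, exists i, v \in X i),
      (forall u v : T, e u v -> exists i, (u \in X i) && (v \in X i)) &
      (forall v : T, forall i j : I, v \in X i -> v \in X j ->
          connect (induced F [set l | v \in X l]) i j)].

Definition k_breadth_le (T : finType) (e : rel T) (k r : nat)
  (I : finType) (X : I -> {set T}) : Prop :=
  forall i : I, exists c : 'I_k -> T,
    X i \subset \bigcup_(j < k) disk e r (c j).

Definition tree_breadth_le (T : finType) (e : rel T) (k r : nat) : Prop :=
  exists (I : finType) (F : rel I) (X : I -> {set T}),
    tree_decomposition e F X /\ k_breadth_le e k r X.

Definition balanced_remainder (T : finType) (e : rel T) (S : {set T}) : Prop :=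
  forall x : T, x \in S ->
    2 * #|[set y in S | connect (induced e S) x y]| <= #|T|.

From mathcomp Require Import all_boot zify.
Set Implicit Arguments. Unset Strict Implicit. Unset Printing Implicit Defensive.

(* Some bag X_i of the decomposition is already a balanced separator.
   Otherwise each bag X_i leaves a component C_i with more than |V|/2
   vertices; the nodes whose bags meet C_i form a subtree, and these subtrees
   pairwise intersect because any two of the C_i share a vertex.  By the Helly
   property of subtrees some node i lies in all of them, yet C_i avoids X_i.
   The bag X_i is covered by k disks of radius rho, and padding their centres
   to k distinct vertices only enlarges the removed set. *)

Arguments induced T e S /.

Definition connected_set (T : finType) (e : rel T) (S : {set T}) : Prop :=
  {in S &, forall a b, connect (induced e S) a b}.

Lemma connect_induced_sub (T : finType) (e : rel T) (A B : {set T}) a b :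
  A \subset B -> connect (induced e A) a b -> connect (induced e B) a b.
Proof.
move=> AB; apply: connect_sub => x y /and3P[xA yA exy].
by apply: connect1; rewrite /= exy !(subsetP AB).
Qed.

Section Forests.

Variables (I : finType) (F : rel I).
Hypotheses (Fsym : symmetric F) (Firr : irreflexive F)
  (Facyc : forall c : seq I, ~~ [&& cycle F c, uniq c & 2 < size c]).

Definition leaf_in (U : {set I}) (l : I) : Prop :=
  forall y y', y \in U -> y' \in U -> F l y -> F l y' -> y = y'.

(* Paths are grown at their head: the new head is a neighbour of the old one
   other than its successor, and it cannot lie on the path, or it would close
   a cycle. *)
Lemma long_uniq_path (U : {set I}) :
  U != set0 ->
  (forall l, l \in U -> exists y y', [/\ y \in U, y' \in U, F l y, F l y' & y != y']) ->
  forall m, exists x p,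
    [/\ size p = m, uniq (x :: p), all (mem U) (x :: p) & path F x p].
Proof.
move=> /set0Pn[x0 x0U] branching; elim=> [|m [x [p [sz up aU pa]]]].
  by exists x0, [::]; rewrite /= x0U.
have xU : x \in U by case/andP: aU.
have [y [y' [yU y'U Fxy Fxy' yy']]] := branching x xU.
have [w [wU Fxw w_head]] :
    exists w, [/\ w \in U, F x w & forall z q, p = z :: q -> w != z].
  case: (p) => [|z q]; first by exists y.
  have [yz|yz] := eqVneq y z; last by exists y; split=> // _ _ [<- _].
  by exists y'; split=> // _ _ [<- _]; rewrite -yz eq_sym.
have wNp : w \notin x :: p.
  rewrite in_cons negb_or; apply/andP; split.
    by apply: contraTneq Fxw => ->; rewrite Firr.
  case: p w_head sz up aU pa => [//|z q] w_head _ up _ pa.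
  rewrite in_cons negb_or (w_head z q erefl) /=; apply/negP => /splitPr wq.
  case: wq up pa => q1 q2 up pa.
  apply: (negP (Facyc (x :: z :: rcons q1 w))); apply/and3P; split.
  - move: pa; rewrite /= cat_path /= => /andP[-> /andP[p1 /andP[Fl _]]].
    by rewrite rcons_path rcons_path last_rcons p1 Fl Fsym Fxw.
  - have E : x :: z :: q1 ++ w :: q2 = (x :: z :: rcons q1 w) ++ q2.
      by rewrite /= -cats1 -catA.
    by move: up; rewrite E cat_uniq => /and3P[].
  - by rewrite /= size_rcons.
exists w, (x :: p); split.
- by rewrite /= sz.
- by rewrite cons_uniq wNp up.
- by rewrite /= wU.
- by rewrite /= Fsym Fxw pa.
Qed.

Lemma exists_leaf (U : {set I}) : U != set0 -> exists2 l, l \in U & leaf_in U l.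
Proof.
move=> U0.
pose leafb l := [forall y in U, forall y' in U, F l y ==> F l y' ==> (y == y')].
have [l /andP[lU /forall_inP leaf] | noleaf] := pickP [pred l in U | leafb l].
  exists l => // y y' yU y'U Fy Fy'; apply/eqP.
  by move: (leaf y yU) => /forall_inP/(_ y' y'U); rewrite Fy Fy'.
have branching l : l \in U ->
    exists y y', [/\ y \in U, y' \in U, F l y, F l y' & y != y'].
  move=> lU; move: (noleaf l); rewrite /= lU => /forall_inPn[y yU].
  move=> /forall_inPn[y' y'U]; rewrite !negb_imply => /and3P[Fy Fy' yy'].
  by exists y, y'.
have [x [p [sz up _ _]]] := long_uniq_path U0 branching #|I|.
by move: (max_card (mem (x :: p))); rewrite (card_uniqP up) /= sz ltnn.
Qed.

Lemma connected_setD1_leaf (A : {set I}) l :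
  l \in A -> leaf_in A l -> connected_set F A -> connected_set F (A :\ l).
Proof.
move=> lA leaf cA a b; rewrite !inE => /andP[al aA] /andP[bl bA].
move: (cA a b aA bA) => /connectP[p0 pa0 bE]; subst b.
move: bl bA; case: (shortenP pa0) => p pa up _ bl bA.
(* A shortest path never passes through a leaf, since it would enter and leave
   it through the same neighbour. *)
have lp : l \notin p.
  apply/negP => lp; case/splitPr: lp pa up bl => p1 p2 pa up.
  rewrite last_cat /=; case: p2 pa up => [|z q] pa up; first by rewrite eqxx.
  move=> _; move: pa; rewrite cat_path /=.
  move=> /andP[_ /andP[/and3P[yA _ Fyl] /andP[/and3P[_ zA Flz] _]]].
  have yz := leaf _ _ yA zA (etrans (Fsym _ _) Fyl) Flz.
  move: up; rewrite -cat_cons cat_uniq => /and3P[_ /hasPn Hz _].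
  have zin : z \in l :: z :: q by rewrite !in_cons eqxx orbT.
  by move: (Hz z zin); rewrite -yz (mem_last a p1).
apply/connectP; exists p => //; clear pa0 bA bl up.
elim: p a al aA pa lp => [|z q IH] a al aA //=.
move=> /andP[/and3P[_ zA Faz] pq]; rewrite in_cons negb_or eq_sym => /andP[zl lq].
by rewrite !inE al aA zl zA Faz /= IH.
Qed.

(* Remove a leaf l of the union of the family and
   recurse, unless some member is the singleton {l}. *)
Lemma subtrees_helly (J : finType) (j0 : J) (S : J -> {set I}) :
  (forall j, S j != set0) -> (forall j, connected_set F (S j)) ->
  (forall j j', S j :&: S j' != set0) -> exists x, forall j, x \in S j.
Proof.
have [n] := ubnP #|\bigcup_j S j|; elim: n S => // n IH S ltU Sn Sc Sp.
set U := \bigcup_j S j in ltU.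
have SU j : S j \subset U := bigcup_sup j isT.
have [l lU leaf] : exists2 l, l \in U & leaf_in U l.
  apply: exists_leaf; case/set0Pn: (Sn j0) => a aS.
  by apply/set0Pn; exists a; apply: subsetP aS.
have leafS j : leaf_in (S j) l.
  by move=> y y' yS y'S; apply: leaf; apply: (subsetP (SU j)).
case: (boolP [exists j, S j == [set l]]) => [/existsP[j /eqP Sj] | /existsPn nosing].
  exists l => j'; case/set0Pn: (Sp j j') => a.
  by rewrite Sj !inE => /andP[/eqP-> ].
have S'n j : S j :\ l != set0.
  apply: contraNneq (nosing j) => /eqP; rewrite setD_eq0 subset1 => /orP[//|S0].
  by move: (Sn j); rewrite S0.
have step j : l \in S j -> exists z, [/\ z \in S j, z != l & F l z].
  move=> lS; case/set0Pn: (S'n j) => b; rewrite !inE => /andP[bl bS].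
  case/connectP: (Sc j l b lS bS) => -[|z q] /=; first by move=> _ E; rewrite E eqxx in bl.
  move=> /andP[/and3P[_ zS Flz] _] _; exists z; split=> //.
  by apply: contraTneq Flz => ->; rewrite Firr.
suff [x Hx] : exists x, forall j, x \in S j :\ l.
  by exists x => j; move: (Hx j); rewrite inE => /andP[].
apply: IH => //.
- have sub : \bigcup_j (S j :\ l) \subset U :\ l.
    by apply/bigcupsP => j _; apply: setSD.
  by rewrite (leq_ltn_trans (subset_leq_card sub)) // -ltnS; move: ltU; rewrite (cardsD1 l) lU.
- move=> j; have [lS|lS] := boolP (l \in S j); first exact: connected_setD1_leaf.
  suff -> : S j :\ l = S j by [].
  by apply/setP => y; rewrite !inE; case: eqVneq => // ->; rewrite (negbTE lS).
- move=> j j'; case/set0Pn: (Sp j j') => a; rewrite inE => /andP[aj aj'].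
  have [al|al] := eqVneq a l; last by apply/set0Pn; exists a; rewrite !inE al aj aj'.
  subst a; have [z [zS zl Flz]] := step j aj; have [z' [zS' _ Flz']] := step j' aj'.
  have zz' := leaf _ _ (subsetP (SU j) _ zS) (subsetP (SU j') _ zS') Flz Flz'.
  by apply/set0Pn; exists z; rewrite !inE zl zS zz' zS'.
Qed.

End Forests.

Definition component (T : finType) (e : rel T) (W : {set T}) (x : T) : {set T} :=
  [set y in W | connect (induced e W) x y].

Lemma in_component (T : finType) (e : rel T) (W : {set T}) x y :
  (y \in component e W x) = (y \in W) && connect (induced e W) x y.
Proof. by rewrite inE. Qed.

Section Components.

Variables (T : finType) (e : rel T).
Hypothesis esym : symmetric e.

Lemma path_induced_component (W : {set T}) x a p :
  a \in component e W x -> path (induced e W) a p ->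
  path (induced e (component e W x)) a p.
Proof.
elim: p a => //= z q IH a aK /andP[/and3P[aW zW eaz] pq].
have zK : z \in component e W x.
  move: aK; rewrite !in_component zW => /andP[_ xa].
  by apply: connect_trans xa (connect1 _); rewrite /= aW zW eaz.
by rewrite aK zK eaz IH.
Qed.

Lemma component_connected (W : {set T}) x : connected_set e (component e W x).
Proof.
move=> a b aK; rewrite in_component => /andP[_ xb].
have /connectP[p pa ->] : connect (induced e W) a b.
  have symW : symmetric (induced e W) by move=> u v /=; rewrite esym andbCA.
  apply: connect_trans xb; move: aK; rewrite in_component => /andP[_].
  by rewrite (sym_connect_sym symW).
by apply/connectP; exists p => //; apply: path_induced_component.
Qed.

Lemma balanced_remainder_subset (A B : {set T}) :
  A \subset B -> balanced_remainder e B -> balanced_remainder e A.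
Proof.
move=> AB bB x xA; apply: leq_trans (bB x (subsetP AB x xA)).
rewrite leq_mul2l subset_leq_card ?orbT //.
apply/subsetP => y; rewrite !in_component => /andP[yA xy]; rewrite (subsetP AB) //=.
exact: connect_induced_sub xy.
Qed.

End Components.

Section TreeDecompositions.

Variables (T : finType) (e : rel T) (I : finType) (F : rel I) (X : I -> {set T}).
Hypothesis td : tree_decomposition e F X.

Definition bags_meeting (C : {set T}) : {set I} := [set l | [exists y in C, y \in X l]].

Lemma bags_meeting_connected (C : {set T}) :
  connected_set e C -> connected_set F (bags_meeting C).
Proof.
have [_ _ edge_bag bags_subtree] := td.
have bags_of y l l' : y \in C -> y \in X l -> y \in X l' ->
    connect (induced F (bags_meeting C)) l l'.
  move=> yC yl yl'; apply: connect_induced_sub (bags_subtree y l l' yl yl').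
  by apply/subsetP => m; rewrite /bags_meeting !inE => ym; apply/exists_inP; exists y.
move=> cC a b; rewrite /bags_meeting !inE => /exists_inP[ya yaC ya_a] /exists_inP[yb ybC yb_b].
case/connectP: (cC ya yb yaC ybC) => p pa ybE; rewrite ybE in yb_b.
elim: p ya yaC a ya_a pa yb_b {ybC ybE} => /= [|z q IH] y yC l yl.
  by move=> _; apply: bags_of.
case/andP=> /and3P[_ zC eyz] pq ql.
have [m /andP[ym zm]] := edge_bag y z eyz.
exact: connect_trans (bags_of y _ _ yC yl ym) (IH z zC _ zm pq ql).
Qed.

Lemma tree_decomposition_balanced_bag (t0 : T) :
  symmetric e -> exists i, balanced_remainder e (~: X i).
Proof.
move=> esym; have [[[Fsym Firr] [_ Facyc]] cover _ _] := td.
pose balancedb i := [forall x in ~: X i, 2 * #|component e (~: X i) x| <= #|T|].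
have [/existsP[i /forall_inP bal] | /existsPn unbal] := boolP [exists i, balancedb i].
  by exists i => x /bal.
exfalso.
have big i : exists x, (x \in ~: X i) && (#|T| < 2 * #|component e (~: X i) x|).
  by case/forall_inPn: (unbal i) => x xW; rewrite -ltnNge => lt; exists x; rewrite xW.
have [xf xfP] := fin_all_exists big.
pose C i := component e (~: X i) (xf i).
pose S i := bags_meeting (C i).
have Cbig i : #|T| < 2 * #|C i| by case/andP: (xfP i).
have xfC i : xf i \in C i by rewrite in_component connect0 andbT; case/andP: (xfP i).
have Sn i : S i != set0.
  have [l xl] := cover (xf i).
  by apply/set0Pn; exists l; rewrite inE; apply/exists_inP; exists (xf i).
have Sp i j : S i :&: S j != set0.
  have /set0Pn[w] : C i :&: C j != set0.
    rewrite -card_gt0; have := cardsUI (C i) (C j); have := max_card (C i :|: C j).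
    have := Cbig i; have := Cbig j; lia.
  rewrite inE => /andP[wi wj]; have [l wl] := cover w.
  by apply/set0Pn; exists l; rewrite !inE; apply/andP; split; apply/exists_inP; exists w.
have SC i : connected_set F (S i).
  exact/bags_meeting_connected/component_connected.
have notin i : i \notin S i.
  by rewrite inE; apply/exists_inP => -[y]; rewrite !inE => /andP[/negP].
have [j0 _] := cover t0.
have [x Hx] := subtrees_helly Fsym Firr Facyc j0 Sn SC Sp.
by move: (notin x); rewrite Hx.
Qed.

End TreeDecompositions.

Lemma superset_of_card (T : finType) (A : {set T}) m :
  #|A| <= m -> m <= #|T| -> exists2 B : {set T}, A \subset B & #|B| = m.
Proof.
elim: m => [|m IH] Am mT.
  by move: Am; rewrite leqn0 cards_eq0 => /eqP ->; exists set0; rewrite ?cards0.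
have [lt|gt|eq] := ltngtP #|A| m.+1; last 2 first.
- by move: Am; rewrite leqNgt gt.
- by exists A.
have [B AB Bm] := IH lt (ltnW mT).
have /set0Pn[x] : ~: B != set0 by rewrite -card_gt0; have := cardsC B; lia.
rewrite inE => xB; exists (x |: B); first exact: subset_trans AB (subsetU1 x B).
by rewrite cardsU1 xB Bm.
Qed.

Lemma injective_cover (T : finType) k (c : 'I_k -> T) : k <= #|T| ->
  exists c' : 'I_k -> T, injective c' /\ forall j, exists j', c' j' = c j.
Proof.
move=> kT; have cA : #|[set c j | j : 'I_k]| <= k.
  by rewrite (leq_trans (leq_imset_card _ _)) ?card_ord.
have [B cB Bk] := superset_of_card cA kT.
exists (fun j => enum_val (cast_ord (esym Bk) j)); split.
  by move=> j1 j2 /enum_val_inj /cast_ord_inj.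
move=> j; have cjB : c j \in B by apply: (subsetP cB); apply: imset_f.
by exists (cast_ord Bk (enum_rank_in cjB (c j))); rewrite cast_ordK enum_rankK_in.
Qed.

Theorem lemma10 (k rho : nat) (T : finType) (e : rel T) :
  1 <= k ->
  simple_graph e -> connected_graph e ->
  k <= #|T| ->
  tree_breadth_le e k rho ->
  exists c : 'I_k -> T, injective c /\
    balanced_remainder e (~: \bigcup_(j < k) disk e rho (c j)).
Proof.
move=> k1 [esym _] _ kT [I [F [X [td breadth]]]].
have [t0 _] := card_gt0P (leq_trans k1 kT).
have [i bal_i] := tree_decomposition_balanced_bag td t0 esym.
have [c Xc] := breadth i.
have [c' [c'inj c'c]] := injective_cover c kT.
exists c'; split=> //; apply: balanced_remainder_subset bal_i; rewrite setCS.
apply: subset_trans Xc _; apply/bigcupsP => j _.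
by have [j' <-] := c'c j; exact: (bigcup_sup j').
Qed.
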